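(* Let $\mathcal S$ be a subset of a finite multi-algebra $\mathcal A=\mathcal A_1\times\cdots\times\mathcal A_m$ and $H=(h_1,\dots,h_m)$ a multi-refinement of $\mathcal S$. (1) If for every slice $\mathcal S_i$ and every $\diamond$-consistent three-variable network $N$ over $\mathcal S_i$, the network $h_i(N)$ is still $\diamond$-consistent, then $\mathcal S$ is composition stable through $H$. (2) If every bi-slice $\mathcal S_{i,j}$ is projection stable through $(h_i,h_j)$, then $\mathcal S$ is projection stable through $H$.
   Context: A finite non-associative algebra is a tuple $(\mathcal A,\cup,\neg,\emptyset,\mathcal B,\diamond,\overline{\cdot},e)$ where $(\mathcal A,\cup,\neg,\emptyset,\mathcal B)$ is a finite Boolean algebra and for all $x,y,z$: $\overline{\overline x}=x$, $\overline{x\cup y}=\overline x\cup\overline y$, $\overline{x\diamond y}=\overline y\diamond\overline x$, $e\diamond x=x\diamond e=x$, $x\diamond(y\cup z)=(x\diamond y)\cup(x\diamond z)$, $(x\diamond y)\cap\overline z=\emptyset\iff(y\diamond z)\cap\overline x=\emptyset$. $r\subseteq r'$ means $r\cup r'=r'$. A projection operator from $\mathcal A$ to $\mathcal A'$ is a map $\Rsh$ with $\Rsh(r\cup r')=\Rsh r\cup\Rsh r'$ and $\Rsh\overline r=\overline{\Rsh r}$. A finite multi-algebra is a product $\mathcal A_1\times\cdots\times\mathcal A_m$ ($m\ge1$; $m=1$ gives a single algebra) of finite non-associative algebras with projection operators $\Rsh_i^j:\mathcal A_i\to\mathcal A_j$ for distinct $i,j$; operations componentwise on $R=(R_1,\dots,R_m)$.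 $R$ is $\Rsh$-consistent if $R_j\subseteq\Rsh_i^jR_i$ for all distinct $i,j$ and all $R_i\ne\emptyset$. A network over $\mathcal S$ is a finite set $E$ of variables with $N^{xy}\in\mathcal S$ for all distinct $x,y$, $N^{yx}=\overline{N^{xy}}$; slice $N_i^{xy}=(N^{xy})_i$. $N$ is $\diamond$-consistent if for each $i$, $N_i^{xz}\subseteq N_i^{xy}\diamond N_i^{yz}$ for all distinct $x,y,z$ and $N_i^{xy}\neq\emptyset$ for all $x,y$. Slices $\mathcal S_i=\{R_i:R\in\mathcal S\}$; bi-slice $\mathcal S_{i,j}=\{(R_i,R_j):R\in\mathcal S\}$, a subset of the multi-algebra $\mathcal A_i\times\mathcal A_j$ with projections $\Rsh_i^j,\Rsh_j^i$. A refinement of a subset $\mathcal S$ is a function $H$ on $\mathcal S$ with $H(R)\subseteq R$ and $H(R)$ has no empty component whenever $R$ has none. A multi-refinement is a refinement of the form $H(R)=(h_1(R_1),\dots,h_m(R_m))$ with each $h_i$ a refinement of $\mathcal S_i$. $H(N)$ replaces each $N^{xy}$ by $H(N^{xy})$ (similarly $h_i(N)$ for networks over $\mathcal S_i$). $\mathcal S$ is composition stable through $H$ if $H(N)$ is $\diamond$-consistent for every $\diamond$-consistent network $N$ over $\mathcal S$; projection stable through $H$ if $H(R)$ is $\Rsh$-consistent for every $\Rsh$-consistent $R\in\mathcal S$. *)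

From HB Require Import structures.
From mathcomp Require Import all_boot all_order.
Set Implicit Arguments.
Unset Strict Implicit.
Unset Printing Implicit Defensive.
Import Order.Theory.
Local Open Scope order_scope.

(* A finite non-associative algebra: a finite Boolean algebra
   (finite complemented distributive lattice with top/bottom:
   cup = join, neg = complement, empty = \bot, B = \top, r ⊆ r' = r <= r')
   with converse, composition and identity satisfying the axioms. *)
Record nalg := NAlg {
  na_disp : Order.disp_t;
  na_car : finCTBDistrLatticeType na_disp;
  na_conv : na_car -> na_car;
  na_comp : na_car -> na_car -> na_car;
  na_e : na_car;
  na_convK : forall x, na_conv (na_conv x) = x;
  na_convU : forall x y, na_conv (x `|` y) = na_conv x `|` na_conv y;
  na_convM : forall x y, na_conv (na_comp x y) = na_comp (na_conv y) (na_conv x);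
  na_e_l : forall x, na_comp na_e x = x;
  na_e_r : forall x, na_comp x na_e = x;
  na_compDr : forall x y z, na_comp x (y `|` z) = na_comp x y `|` na_comp x z;
  na_cycle : forall x y z,
    (na_comp x y `&` na_conv z = \bot) <-> (na_comp y z `&` na_conv x = \bot)
}.

Unset Implicit Arguments.
Record multialg := MultiAlg {
  ma_m : nat;
  ma_m_gt0 : 0 < ma_m;
  ma_A : 'I_ma_m -> nalg;
  ma_proj : forall i j : 'I_ma_m, na_car (ma_A i) -> na_car (ma_A j);
  ma_projU : forall i j : 'I_ma_m, i != j -> forall r r',
    ma_proj i j (r `|` r') = ma_proj i j r `|` ma_proj i j r';
  ma_projC : forall i j : 'I_ma_m, i != j -> forall r,
    ma_proj i j (na_conv r) = na_conv (ma_proj i j r)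
}.

Set Implicit Arguments.
Arguments ma_proj {_} i j _.

Definition elt (M : multialg) := forall i : 'I_(ma_m M), na_car (ma_A M i).

Definition network1 (A : nalg) (P : na_car A -> Prop) (V : finType)
    (N : V -> V -> na_car A) : Prop :=
  forall x y : V, x != y -> P (N x y) /\ N y x = na_conv (N x y).

Definition dcons1 (A : nalg) (V : finType) (N : V -> V -> na_car A) : Prop :=
  (forall x y z : V, x != y -> y != z -> x != z ->
     N x z <= na_comp (N x y) (N y z)) /\
  (forall x y : V, x != y -> N x y <> \bot).

Definition refinement1 (A : nalg) (P : na_car A -> Prop) (h : na_car A -> na_car A)
  : Prop :=
  forall r, P r -> h r <= r /\ (r <> \bot -> h r <> \bot).

Definition slice (M : multialg) (S : elt M -> Prop) (i : 'I_(ma_m M))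
  : na_car (ma_A M i) -> Prop :=
  fun a => exists R, S R /\ R i = a.

Arguments slice {M} S i _.

Definition bislice (M : multialg) (S : elt M -> Prop) (i j : 'I_(ma_m M))
  : na_car (ma_A M i) -> na_car (ma_A M j) -> Prop :=
  fun a b => exists R, S R /\ R i = a /\ R j = b.

Arguments bislice {M} S i j _ _.

Definition network (M : multialg) (S : elt M -> Prop) (V : finType)
    (N : V -> V -> elt M) : Prop :=
  forall x y : V, x != y ->
    S (N x y) /\ forall i, N y x i = na_conv (N x y i).

Definition dcons (M : multialg) (V : finType) (N : V -> V -> elt M) : Prop :=
  forall i : 'I_(ma_m M), dcons1 (fun x y => N x y i).

Definition pcons (M : multialg) (R : elt M) : Prop :=
  forall i j : 'I_(ma_m M), i != j -> R i <> \bot -> R j <= ma_proj i j (R i).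

Definition multi_map (M : multialg) (h : forall i, na_car (ma_A M i) -> na_car (ma_A M i))
  : elt M -> elt M := fun R i => h i (R i).

Definition refinement (M : multialg) (S : elt M -> Prop) (H : elt M -> elt M) : Prop :=
  forall R, S R -> (forall i, H R i <= R i) /\
    ((forall i, R i <> \bot) -> forall i, H R i <> \bot).

Definition multi_refinement (M : multialg) (S : elt M -> Prop)
    (h : forall i, na_car (ma_A M i) -> na_car (ma_A M i)) : Prop :=
  refinement S (multi_map h) /\ forall i, refinement1 (slice S i) (h i).

Definition composition_stable (M : multialg) (S : elt M -> Prop) (H : elt M -> elt M)
  : Prop :=
  forall (V : finType) (N : V -> V -> elt M),
    network S N -> dcons N -> dcons (fun x y => H (N x y)).

Definition projection_stable (M : multialg) (S : elt M -> Prop) (H : elt M -> elt M)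
  : Prop :=
  forall R, S R -> pcons R -> pcons (H R).

(* the bi-slice S_{i,j} (a subset of the two-component multi-algebra
   A_i x A_j with projections proj_i^j, proj_j^i) is projection stable
   through (h_i, h_j) *)
Definition bislice_projection_stable (M : multialg) (S : elt M -> Prop)
    (h : forall i, na_car (ma_A M i) -> na_car (ma_A M i)) (i j : 'I_(ma_m M)) : Prop :=
  forall a b, bislice S i j a b ->
    ((a <> \bot -> b <= ma_proj i j a) /\ (b <> \bot -> a <= ma_proj j i b)) ->
    ((h i a <> \bot -> h j b <= ma_proj i j (h i a)) /\
     (h j b <> \bot -> h i a <= ma_proj j i (h j b))).

(* Both stability properties are local. A triangle x, y, z of a network is
   itself a three-variable network over the slice, so the composition
   inclusion for h_i(N) on x, y, z is the hypothesis applied to that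
   triangle; non-emptiness of each h_i(N^{xy}) is part of being a
   refinement. Projection consistency only compares two components at a
   time, i.e. the bi-slices. *)

From mathcomp Require Import all_boot all_order.

Section SingleAlgebra.

Context {A : nalg} {P : na_car A -> Prop}.

Lemma network1_restrict {W V : finType} {f : W -> V} (f_inj : injective f)
    {N : V -> V -> na_car A} :
  network1 P N -> network1 P (fun a b => N (f a) (f b)).
Proof. by move=> netN a b ab; apply: netN; rewrite inj_eq. Qed.

Lemma dcons1_restrict {W V : finType} {f : W -> V} (f_inj : injective f)
    {N : V -> V -> na_car A} :
  dcons1 N -> dcons1 (fun a b => N (f a) (f b)).
Proof.
case=> compN nbotN; split=> [a b c ab bc ac | a b ab].
  by apply: compN; rewrite inj_eq.
by apply: nbotN; rewrite inj_eq.
Qed.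

Lemma triangle_inj {V : finType} {x y z : V} :
  x != y -> y != z -> x != z -> injective (tnth [tuple x; y; z]).
Proof.
move=> xy yz xz; apply/tuple_uniqP.
by rewrite /= !inE negb_or xy xz yz.
Qed.

Lemma dcons1_refine_of_triangles {h : na_car A -> na_car A} :
  refinement1 P h ->
  (forall N : 'I_3 -> 'I_3 -> na_car A,
      network1 P N -> dcons1 N -> dcons1 (fun a b => h (N a b))) ->
  forall (V : finType) (N : V -> V -> na_car A),
    network1 P N -> dcons1 N -> dcons1 (fun x y => h (N x y)).
Proof.
move=> refh triangles V N netN dconsN; split=> [x y z xy yz xz | x y xy].
  have tri_inj := triangle_inj xy yz xz.
  have [compT _] := triangles _ (network1_restrict tri_inj netN)
                                (dcons1_restrict tri_inj dconsN).
  exact: (compT ord0 (@Ordinal 3 1 isT) (@Ordinal 3 2 isT)).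
have [PN _] := netN x y xy.
exact: (refh _ PN).2 (dconsN.2 x y xy).
Qed.

End SingleAlgebra.

Section MultiAlgebra.

Variables (M : multialg) (S : elt M -> Prop).
Variable h : forall i, na_car (ma_A M i) -> na_car (ma_A M i).

Lemma network_slice {V : finType} {N : V -> V -> elt M} (i : 'I_(ma_m M)) :
  network S N -> network1 (slice S i) (fun x y => N x y i).
Proof.
move=> netN x y xy; have [SN convN] := netN x y xy.
by split; [exists (N x y) | exact: convN].
Qed.

Lemma composition_stable_multi_map :
  (forall i, refinement1 (slice S i) (h i)) ->
  (forall (i : 'I_(ma_m M)) (V : finType) (N : V -> V -> na_car (ma_A M i)),
      #|V| = 3 -> network1 (slice S i) N -> dcons1 N ->
      dcons1 (fun x y => h i (N x y))) ->
  composition_stable S (multi_map h).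
Proof.
move=> refh triangles V N netN dconsN i.
apply: (dcons1_refine_of_triangles (refh i)) (network_slice i netN) (dconsN i).
by move=> N3; apply: triangles; rewrite card_ord.
Qed.

Lemma projection_stable_multi_map :
  (forall i j : 'I_(ma_m M), i != j -> bislice_projection_stable S h i j) ->
  projection_stable S (multi_map h).
Proof.
move=> bistable R SR pconsR i j ij.
have ji : j != i by rewrite eq_sym.
have bisR : bislice S i j (R i) (R j) by exists R.
by have [] := bistable i j ij _ _ bisR (conj (pconsR i j ij) (pconsR j i ji)).
Qed.

End MultiAlgebra.

Theorem proposition6p18 (M : multialg) (S : elt M -> Prop)
    (h : forall i, na_car (ma_A M i) -> na_car (ma_A M i)) :
  multi_refinement S h ->
  ((forall (i : 'I_(ma_m M)) (V : finType) (N : V -> V -> na_car (ma_A M i)),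
      #|V| = 3 -> network1 (slice S i) N -> dcons1 N ->
      dcons1 (fun x y => h i (N x y))) ->
   composition_stable S (multi_map h)) /\
  ((forall i j : 'I_(ma_m M), i != j -> bislice_projection_stable S h i j) ->
   projection_stable S (multi_map h)).
Proof.
case=> _ refh; split.
  exact: composition_stable_multi_map.
exact: projection_stable_multi_map.
Qed.
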